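(* Let $R(m,n)$ be a rectangular supergrid graph with $m\ge 3$ and $n\ge 2$, and let $s=w=(1,1)$, $t=z=(2,1)$ and $f=(3,1)$. Then there exists a Hamiltonian $(s,t)$-path $P$ of $R(m,n)$ such that the edge $(z,f)$ belongs to $P$.
   Context: The rectangular supergrid graph $R(m,n)$ has vertex set $\{(x,y)\in\mathbb{Z}^2:1\le x\le m,\ 1\le y\le n\}$, two distinct vertices $u,v$ being adjacent iff $|u_x-v_x|\le 1$ and $|u_y-v_y|\le 1$. A Hamiltonian $(s,t)$-path is a simple path from $s$ to $t$ visiting every vertex exactly once. *)

From mathcomp Require Import all_boot.
Set Implicit Arguments. Unset Strict Implicit. Unset Printing Implicit Defensive.

Definition vertex := (nat * nat)%type.

Definition in_grid (m n : nat) (v : vertex) : bool :=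
  (1 <= v.1 <= m) && (1 <= v.2 <= n).

Definition close (a b : nat) : bool := (a <= b.+1) && (b <= a.+1).

Definition sg_adj (m n : nat) (u v : vertex) : bool :=
  [&& in_grid m n u, in_grid m n v, u != v, close u.1 v.1 & close u.2 v.2].

Definition ham_path (m n : nat) (s t : vertex) (p : seq vertex) : Prop :=
  [/\ p != [::], head s p = s, last s p = t & uniq p] /\
  [/\ path (sg_adj m n) s (behead p),
      all (in_grid m n) p
    & forall v, in_grid m n v -> v \in p].

Definition path_has_edge (p : seq vertex) (u v : vertex) : Prop :=
  exists i, i.+1 < size p /\
    ((nth u p i = u /\ nth u p i.+1 = v) \/ (nth u p i = v /\ nth u p i.+1 = u)).

(** The path climbs column 1 from (1,1) to (1,n), sweeps the block
    [2..m] x [2..n] from its top-left corner (2,n) to its bottom-right corner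
    (m,2), drops to (m,1) and runs back along row 1 to (3,1) and finally (2,1).
    The block is swept row by row, alternating directions; when the number of
    rows is even, the last two rows are covered together column by column,
    which uses the diagonal edges of the supergrid and fixes the parity so
    that the sweep ends at the bottom-right corner. *)

From mathcomp Require Import all_boot zify.

Set Implicit Arguments.
Unset Strict Implicit.
Unset Printing Implicit Defensive.

(* [sg_adj m n] is [king] restricted to R(m,n); working with [king] lets the
   pieces be built independently of the grid they end up in. *)
Definition king (u v : vertex) : bool :=
  [&& u != v, close u.1 v.1 & close u.2 v.2].

Lemma king_pair a b c d :
  king (a, b) (c, d) = [&& (a != c) || (b != d), close a c & close b d].
Proof. by rewrite /king xpair_eqE negb_and. Qed.

Lemma king_sym : symmetric king.
Proof. by move=> [a b] [c d]; rewrite !king_pair /close; lia. Qed.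

Definition rect (x1 x2 y1 y2 : nat) : {pred vertex} :=
  [pred v | (x1 <= v.1 <= x2) && (y1 <= v.2 <= y2)].

Ltac grid_arith :=
  first [by rewrite king_pair /close; lia | by move=> [a b]; rewrite !inE /=; lia].

Definition spanning_path (A : {pred vertex}) (s : vertex) (q : seq vertex)
    (t : vertex) : Prop :=
  [/\ path king s q, last s q = t, uniq (s :: q) & s :: q =i A].

Lemma spanning_path_cat (C A B : {pred vertex}) s p t u q v :
  spanning_path A s p t -> spanning_path B u q v -> king t u ->
  {in A, forall x, x \notin B} -> C =i [predU A & B] ->
  spanning_path C s (p ++ u :: q) v.
Proof.
move=> [Pp Lp Up Ap] [Pq Lq Uq Aq] tu AB CAB; split.
- by rewrite cat_path Pp /= Lp tu.
- by rewrite last_cat.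
- rewrite -cat_cons cat_uniq Up Uq andbT andTb; apply/hasPn => x.
  by rewrite Aq Ap => xB; apply/negP => /AB; rewrite xB.
- by move=> x; rewrite CAB -cat_cons mem_cat Ap Aq.
Qed.

Lemma spanning_path_rev A s q t :
  spanning_path A s q t -> spanning_path A t (rev (belast s q)) s.
Proof.
move=> [Pq Lq Uq Aq]; rewrite -Lq; split.
- by rewrite rev_path (eq_path (e' := king)) // => x y; apply: king_sym.
- by rewrite -(last_cons s) -rev_rcons -lastI rev_cons last_rcons.
- by rewrite -rev_rcons -lastI rev_uniq.
- by move=> x; rewrite -rev_rcons -lastI mem_rev Aq.
Qed.

Lemma point_spanning_path x y : spanning_path (rect x x y y) (x, y) [::] (x, y).
Proof. by split=> // -[a b]; rewrite !inE xpair_eqE /=; lia. Qed.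

Lemma row_spanning_path x1 x2 y : x1 <= x2 ->
  exists q, spanning_path (rect x1 x2 y y) (x1, y) q (x2, y).
Proof.
move=> /subnKC <-; elim: (x2 - x1) => [|k [q Pq]].
  by exists [::]; rewrite addn0; apply: point_spanning_path.
exists (q ++ [:: (x1 + k.+1, y)]).
by apply: (spanning_path_cat Pq (point_spanning_path _ _)); grid_arith.
Qed.

Lemma column_spanning_path x y1 y2 : y1 <= y2 ->
  exists q, spanning_path (rect x x y1 y2) (x, y1) q (x, y2).
Proof.
move=> /subnKC <-; elim: (y2 - y1) => [|k [q Pq]].
  by exists [::]; rewrite addn0; apply: point_spanning_path.
exists (q ++ [:: (x, y1 + k.+1)]).
by apply: (spanning_path_cat Pq (point_spanning_path _ _)); grid_arith.
Qed.

Lemma zigzag_spanning_path x1 x2 y : x1 <= x2 ->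
  exists q, spanning_path (rect x1 x2 y y.+1) (x1, y.+1) q (x2, y).
Proof.
have down x : exists q, spanning_path (rect x x y y.+1) (x, y.+1) q (x, y).
  have [q /spanning_path_rev Pq] := column_spanning_path x (leqnSn y).
  by exists (rev (belast (x, y) q)).
move=> /subnKC <-; elim: (x2 - x1) => [|k [q Pq]]; first by rewrite addn0.
have [r Pr] := down (x1 + k.+1).
by exists (q ++ (x1 + k.+1, y.+1) :: r); apply: (spanning_path_cat Pq Pr); grid_arith.
Qed.

Lemma block_spanning_path x1 x2 y1 y2 : x1 <= x2 -> y1 <= y2 ->
  exists q, spanning_path (rect x1 x2 y1 y2) (x1, y2) q (x2, y1).
Proof.
move=> le_x; elim/ltn_ind: y2 => y2 IH le_y.
have [->|[->|lt_y]] : y2 = y1 \/ y2 = y1.+1 \/ y1.+2 <= y2 by lia.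
- exact: row_spanning_path.
- exact: zigzag_spanning_path.
have [q1 P1] := row_spanning_path y2 le_x.
have [q2 /spanning_path_rev P2] := row_spanning_path y2.-1 le_x.
have [q3 P3] := IH y2.-2 ltac:(lia) ltac:(lia).
eexists; apply: (spanning_path_cat
  (spanning_path_cat (C := rect x1 x2 y2.-1 y2) P1 P2 _ _ _) P3); grid_arith.
Qed.

Lemma spanning_path_ham_path m n s q t :
  spanning_path (rect 1 m 1 n) s q t -> ham_path m n s t (s :: q).
Proof.
move=> [Pq Lq Uq Aq].
have grid_q : all (in_grid m n) (s :: q) by apply/allP => v; rewrite Aq.
split; split=> //; last by move=> v; rewrite Aq.
apply: sub_in_path grid_q Pq => u v gu gv uv.
by rewrite /sg_adj (gu : in_grid m n u) (gv : in_grid m n v).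
Qed.

Lemma path_has_edge_last x p u v :
  last x p = u -> path_has_edge (rcons (x :: p) v) v u.
Proof.
move=> Lp; exists (size p); rewrite size_rcons !nth_rcons /= !ltnSn ltnn eqxx.
split=> //; right; split=> //; rewrite -Lp; exact: (nth_last v (x :: p)).
Qed.

Theorem lemma4 (m n : nat) : 3 <= m -> 2 <= n ->
  let s := (1, 1) in let t := (2, 1) in let z := (2, 1) in let f := (3, 1) in
  exists p : seq vertex, ham_path m n s t p /\ path_has_edge p z f.
Proof.
move=> le3m le2n /=.
have [qc Pc] := column_spanning_path 1 (ltnW le2n).
have [qb Pb] := block_spanning_path (ltnW le3m) le2n.
have [qr /spanning_path_rev Pr] := row_spanning_path 1 le3m.
eexists; split.
  apply/spanning_path_ham_path/(spanning_path_cat Pc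
    (spanning_path_cat (C := rect 2 m 1 n) Pb
      (spanning_path_cat (C := rect 2 m 1 1) Pr (point_spanning_path 2 1) _ _ _)
      _ _ _)); grid_arith.
rewrite cats1 -rcons_cons -rcons_cat -rcons_cons -rcons_cat -rcons_cons.
apply: path_has_edge_last; rewrite !(last_cat, last_cons).
by case: Pr.
Qed.
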